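(* Let $U:G\to\mathrm{Aut}(\mathcal{H}_{\rm kin})$ be a unitary representation with $U(G)\subset\mathcal{P}_n$, and let $\underline U:\ell^2(G)\to\mathcal{B}(\mathcal{H}_{\rm kin})$ be its associated $*$-algebra representation. Then the following are equivalent: (1) $U$ is faithful as a group representation and $-I\notin U(G)$; (2) $\underline U$ is faithful as a $*$-algebra representation (i.e. $\ker\underline U=\{0\}$).
   Context: $\mathcal{H}_{\rm kin}=(\mathbb{C}^2)^{\otimes n}$, $\mathcal{P}_n$ is the $n$-qubit Pauli group, $G=\mathbb{Z}_2^{\times(n-k)}$ with $0<k<n$. $\ell^2(G)$ is the group algebra of $G$: formal complex linear combinations $\sum_g f(g)\,g$, with product extending $g\star h=gh$ bilinearly and involution extending $g^*=g^{-1}$ antilinearly. $\underline U$ is the unique linear map with $\underline U(g)=U(g)$ for $g\in G$. *)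

From mathcomp Require Import all_boot all_algebra all_field.
From mathcomp Require Import mxtens.
Set Implicit Arguments. Unset Strict Implicit. Unset Printing Implicit Defensive.
Import GRing.Theory Num.Theory.
Local Open Scope ring_scope.

(* H_kin = (C^2)^{\otimes n} is represented by C^(2^n); operators are 'M[algC]_(2^n). *)

(* single-qubit Pauli matrices, indexed by 'I_4 : 0 = I, 1 = X, 2 = Y, 3 = Z *)
Definition pauli1 (a : 'I_4) : 'M[algC]_2 :=
  \matrix_(i < 2, j < 2)
   match val a with
   | 0 => if i == j then 1 else 0
   | 1 => if i != j then 1 else 0
   | 2 => if i == j then 0 else if val i == 0 then - 'i else 'i
   | _ => if i == j then (if val i == 0 then 1 else -1) else 0
   end.

Fixpoint pauli_tens (s : seq 'I_4) : 'M[algC]_(2 ^ size s) :=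
  match s return 'M[algC]_(2 ^ size s) with
  | [::] => 1%:M
  | a :: s' => castmx (esym (expnS 2 (size s')), esym (expnS 2 (size s')))
                      (pauli1 a *t pauli_tens s')
  end.

Definition pauli_string n (s : n.-tuple 'I_4) : 'M[algC]_(2 ^ n) :=
  castmx (congr1 (expn 2) (size_tuple s), congr1 (expn 2) (size_tuple s))
         (pauli_tens s).

Definition in_pauli_group (n : nat) (M : 'M[algC]_(2 ^ n)) : Prop :=
  exists (c : 'I_4) (s : n.-tuple 'I_4), M = ('i ^+ c) *: pauli_string s.

Definition adjmx m (A : 'M[algC]_m) : 'M[algC]_m := (map_mx Num.conj A)^T.

(* The group G = Z_2^{n-k}, written additively *)
Definition Zgrp (m : nat) := 'rV['F_2]_m.

Definition unitary_rep (m N : nat) (U : Zgrp m -> 'M[algC]_N) : Prop :=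
  (forall g h : Zgrp m, U (g + h) = U g *m U h) /\
  (forall g : Zgrp m, U g *m adjmx (U g) = 1%:M).

(* group algebra l^2(G): formal C-linear combinations, i.e. functions G -> C *)
Definition group_alg (m : nat) := {ffun Zgrp m -> algC}.

Definition ulin (m N : nat) (U : Zgrp m -> 'M[algC]_N) (f : group_alg m) : 'M[algC]_N :=
  \sum_(g : Zgrp m) f g *: U g.

From mathcomp Require Import all_boot all_algebra all_field mxtens.
Set Implicit Arguments. Unset Strict Implicit. Unset Printing Implicit Defensive.
Import GRing.Theory Num.Theory.
Local Open Scope ring_scope.

(* Every Pauli string other than the identity is traceless, so an element of
   the Pauli group is either a scalar or traceless.  Under (1), for g <> 0 the
   matrix U g is an involution (G has exponent 2) other than 1 and -1, so it is
   not a scalar; hence tr (U g) = 0, and the character orthogonality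
   tr (U(f) U(h)) = 2^n f(h) recovers f from U(f).  Conversely, if U g = U h
   with g <> h, or U g = -1, then delta_g - delta_h, resp. delta_0 + delta_g,
   is a nonzero element of the kernel of the linear extension. *)

Lemma mxtrace_castmx (R : pzRingType) m m' (e : m = m') (A : 'M[R]_m) :
  \tr (castmx (e, e) A) = \tr A.
Proof. by case: m' / e; rewrite castmx_id. Qed.

Lemma castmx1 (R : pzRingType) m m' (e : m = m') :
  castmx (e, e) (1%:M : 'M[R]_m) = 1%:M.
Proof. by case: m' / e; rewrite castmx_id. Qed.

Lemma mxtrace_tens (R : comPzRingType) m p (A : 'M[R]_m) (B : 'M[R]_p) :
  \tr (A *t B) = \tr A * \tr B.
Proof. by rewrite /mxtrace mulr_sum; apply: eq_bigr => i _; rewrite mxE. Qed.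

Lemma tensmx11 (R : comPzRingType) m p :
  (1%:M : 'M[R]_m) *t (1%:M : 'M[R]_p) = 1%:M.
Proof.
apply/matrixP=> i j.
case: (mxtens_indexP i) => i0 i1; case: (mxtens_indexP j) => j0 j1.
rewrite tensmxE !mxE (can_eq (@mxtens_indexK _ _)) xpair_eqE.
by case: (i0 == j0); case: (i1 == j1); rewrite ?mulr1 ?mulr0.
Qed.

Lemma pauli1_0 : pauli1 0 = 1%:M.
Proof. by apply/matrixP => i j; rewrite !mxE; case: (i == j). Qed.

Lemma mxtrace_pauli1 a : \tr (pauli1 a) = if a == 0 then 2 else 0.
Proof.
case: a => m; do 4?[case: m => [|m]] => // lt_m4.
all: by rewrite /mxtrace !big_ord_recr big_ord0 /= !mxE /= ?add0r ?addr0 ?subrr.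
Qed.

Lemma mxtrace_pauli_tens s :
  \tr (pauli_tens s) = if all (pred1 0) s then (2 ^ size s)%:R else 0.
Proof.
elim: s => [|a s IHs] /=; first by rewrite mxtrace1.
rewrite mxtrace_castmx mxtrace_tens mxtrace_pauli1 IHs.
case: (a == 0); last by rewrite mul0r.
by case: (all _ _); rewrite ?mulr0 // expnS natrM.
Qed.

Lemma pauli_tens_id s : all (pred1 0) s -> pauli_tens s = 1%:M.
Proof.
elim: s => [|a s IHs] //= /andP[/eqP -> /IHs ->].
by rewrite pauli1_0 tensmx11 castmx1.
Qed.

Lemma mxtrace_pauli_string n (s : n.-tuple 'I_4) :
  \tr (pauli_string s) = if all (pred1 0) s then (2 ^ n)%:R else 0.
Proof. by rewrite mxtrace_castmx mxtrace_pauli_tens size_tuple. Qed.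

Lemma pauli_string_id n (s : n.-tuple 'I_4) :
  all (pred1 0) s -> pauli_string s = 1%:M.
Proof. by move/pauli_tens_id; rewrite /pauli_string => ->; rewrite castmx1. Qed.

Lemma pauli_group_traceless_or_scalar n (M : 'M_(2 ^ n)) :
  in_pauli_group M -> \tr M = 0 \/ exists a, M = a%:M.
Proof.
case=> c [s ->]; rewrite mxtraceZ mxtrace_pauli_string.
case: ifP => [id_s | _]; last by left; rewrite mulr0.
by right; exists ('i ^+ c); rewrite pauli_string_id // scalemx1.
Qed.

Lemma pauli_involution_traceless n (M : 'M_(2 ^ n)) :
  in_pauli_group M -> M *m M = 1%:M -> M != 1%:M -> M != - 1%:M -> \tr M = 0.
Proof.
move=> /pauli_group_traceless_or_scalar[// | [a ->]] sqM1 neq1 neqN1.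
have z : 'I_(2 ^ n) by exists 0%N; rewrite expn_gt0.
move: sqM1; rewrite -scalar_mxM => /matrixP /(_ z z).
rewrite !mxE eqxx mulr1n -expr2 => /eqP; rewrite sqrf_eq1.
by case/orP => /eqP a_pm1; rewrite a_pm1 ?raddfN eqxx in neq1 neqN1.
Qed.

Lemma unitary_rep_id m N (U : Zgrp m -> 'M_N) : unitary_rep U -> U 0 = 1%:M.
Proof.
case=> UD Uunit; have U0_idem : U 0 *m U 0 = U 0 by rewrite -UD addr0.
have U0_def : U 0 = U 0 *m (U 0 *m adjmx (U 0)) by rewrite Uunit mulmx1.
by rewrite U0_def mulmxA U0_idem Uunit.
Qed.

Lemma Zgrp_addxx m (g : Zgrp m) : g + g = 0.
Proof.
by apply/matrixP => i j; rewrite !mxE addrr_pchar2 // (pchar_Fp (isT : prime 2)).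
Qed.

Section LinearCombinationInjective.

Variables (R : numDomainType) (T : finType) (N : nat) (U : T -> 'M[R]_N).

Lemma sum_delta_scale g : \sum_x (x == g)%:R *: U x = U g.
Proof.
rewrite (bigD1 g) //= eqxx scale1r big1 ?addr0 // => x /negbTE ->.
by rewrite scale0r.
Qed.

Hypothesis lincomb_inj : forall f : {ffun T -> R}, \sum_x f x *: U x = 0 -> f = 0.

Lemma lincomb_inj_injective : injective U.
Proof.
move=> g h eqU; apply/eqP/negPn/negP => neq_gh.
pose f := [ffun x => (x == g)%:R - (x == h)%:R : R].
have /lincomb_inj/ffunP/(_ g) : \sum_x f x *: U x = 0.
  under eq_bigr do rewrite ffunE scalerBl.
  by rewrite sumrB !sum_delta_scale eqU subrr.
by rewrite !ffunE eqxx (negbTE neq_gh) subr0 => /eqP; rewrite oner_eq0.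
Qed.

Lemma lincomb_inj_neq_opp g h : U g != - U h.
Proof.
apply/eqP => eqU; pose f := [ffun x => (x == g)%:R + (x == h)%:R : R].
have /lincomb_inj/ffunP/(_ g) : \sum_x f x *: U x = 0.
  under eq_bigr do rewrite ffunE scalerDl.
  by rewrite big_split /= !sum_delta_scale eqU addNr.
by rewrite !ffunE eqxx -natrD => /eqP; rewrite pnatr_eq0.
Qed.

End LinearCombinationInjective.

Section TracelessRepresentation.

Variables (R : numDomainType) (V : finZmodType) (N : nat) (U : V -> 'M[R]_N).
Hypotheses (UD : {morph U : g h / g + h >-> g *m h}) (U0 : U 0 = 1%:M).
Hypothesis U_traceless : forall g, g != 0 -> \tr (U g) = 0.

Lemma mxtrace_lincomb_mul f h :
  \tr ((\sum_g f g *: U g) *m U (- h)) = f h * N%:R.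
Proof.
rewrite mulmx_suml linear_sum /= (bigD1 h) //= big1 => [|g neq_gh].
  by rewrite addr0 -scalemxAl -UD subrr U0 mxtraceZ mxtrace1.
by rewrite -scalemxAl -UD mxtraceZ U_traceless ?mulr0 // subr_eq0.
Qed.

Lemma traceless_lincomb_inj :
  (0 < N)%N -> forall f : {ffun V -> R}, \sum_g f g *: U g = 0 -> f = 0.
Proof.
move=> N_gt0 f f0; apply/ffunP => h; rewrite ffunE.
have /eqP := mxtrace_lincomb_mul f h.
by rewrite f0 mul0mx mxtrace0 eq_sym mulf_eq0 pnatr_eq0 eqn0Ngt N_gt0 orbF => /eqP.
Qed.

End TracelessRepresentation.

Theorem mainTheorem19 (n k : nat) (hk0 : (0 < k)%N) (hkn : (k < n)%N)
  (U : Zgrp (n - k) -> 'M[algC]_(2 ^ n)) :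
  unitary_rep U ->
  (forall g, in_pauli_group (U g)) ->
  ((injective U /\ (forall g, U g != - 1%:M)) <->
   (forall f : group_alg (n - k), ulin U f = 0 -> f = 0)).
Proof.
move=> repU pauliU; have U0 := unitary_rep_id repU; case: repU => UD _.
split=> [[Uinj U_neqN1] | ulin_inj].
- apply: (traceless_lincomb_inj UD U0) => [g g_neq0|]; last by rewrite expn_gt0.
  apply: pauli_involution_traceless (pauliU g) _ _ (U_neqN1 g).
    by rewrite -UD Zgrp_addxx U0.
  by rewrite -U0; apply: contra g_neq0 => /eqP/Uinj ->.
- split; first exact: lincomb_inj_injective ulin_inj.
  by move=> g; rewrite -U0; apply: lincomb_inj_neq_opp.
Qed.
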